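(* Let $f:\mathbb N\to\mathbb N$ be a function with $f(n)\to\infty$ as $n\to\infty$, and let $\Sigma$ be a finite alphabet with at least two letters. Then there is a right-infinite recurrent word $\mathbf w$ over $\Sigma$ such that $p_{\mathbf w}(n)\le n f(n)$ for all sufficiently large $n$, and such that $\mathbf w$ has infinitely many distinct primitive factors $y$ with the property that $y^n$ is a factor of $\mathbf w$ for every $n\ge 1$.
   Context: A factor of $\mathbf w$ is a finite block of contiguous symbols of $\mathbf w$; $p_{\mathbf w}(n)$ is the number of distinct factors of length $n$. A right-infinite word is recurrent if every factor occurs infinitely often in it. A nonempty word is primitive if it is not of the form $z^m$ with $m\ge 2$. *)

From mathcomp Require Import all_boot.
From mathcomp Require Import boolp.
Set Implicit Arguments. Unset Strict Implicit. Unset Printing Implicit Defensive.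

Definition block (Sigma : Type) (w : nat -> Sigma) (i n : nat) : seq Sigma :=
  mkseq (fun k => w (i + k)) n.

Definition occurs_at (Sigma : eqType) (w : nat -> Sigma) (u : seq Sigma) (i : nat) : Prop :=
  block w i (size u) = u.

Definition factor (Sigma : eqType) (w : nat -> Sigma) (u : seq Sigma) : Prop :=
  exists i, occurs_at w u i.

Definition complexity (Sigma : finType) (w : nat -> Sigma) (n : nat) : nat :=
  #|[set t : n.-tuple Sigma | `[< factor w (tval t) >] ]|.

Definition recurrent (Sigma : eqType) (w : nat -> Sigma) : Prop :=
  forall u, factor w u -> forall N, exists i, N <= i /\ occurs_at w u i.

Definition wpow (Sigma : Type) (y : seq Sigma) (m : nat) : seq Sigma :=
  flatten (nseq m y).

Definition primitive (Sigma : eqType) (y : seq Sigma) : Prop :=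
  y <> [::] /\ forall (z : seq Sigma) (m : nat), 2 <= m -> y <> wpow z m.

From mathcomp Require Import all_boot zify.
From mathcomp Require Import boolp.
Set Implicit Arguments. Unset Strict Implicit. Unset Printing Implicit Defensive.

(* Fix letters a <> b and put y_j = a^(run j) b, where run grows fast enough
   that f(n) >= 5j + 11 once n >= run j.  Define finite words
     W_0 = b,    W_(k+1) = W_k X_k W_k,    X_k = y_(r k)^(run k),
   where r k is the 2-adic valuation of k + 1 (the ruler sequence), and let
   w be their common limit.  Then:
   - w is recurrent, since every factor of W_m reappears in the right copy
     of W_m inside W_(m+1);
   - every power y_j^m is a factor of w: X_k = y_j^(run k) with run k >= m
     for the infinitely many k with r k = j;
   - if run (J-1) < n <= run J, every factor of length n of w lies in an
     explicit list of at most n(5J + 6) words (factors straddling a boundary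
     of X_k for k <= J, factors of some y_c^omega, and factors straddling a
     boundary of X_k for k > J, which only depend on a suffix of W_(J+1) and
     on y_(min (r k) J)); hence p_w(n) <= n f(n). *)

Lemma eq_block (S : Type) (u v : nat -> S) i j n :
  (forall t, t < n -> u (i + t) = v (j + t)) -> block u i n = block v j n.
Proof. by move=> uv; apply/eq_in_map => t; rewrite mem_iota add0n => /uv. Qed.

Lemma complexity_le_size (S : finType) (u : nat -> S) n (F : seq (seq S)) :
  (forall i, block u i n \in F) -> complexity u n <= size F.
Proof.
move=> uF; rewrite /complexity cardE -(size_map val); apply: uniq_leq_size.
  by rewrite map_inj_uniq ?enum_uniq //; apply: val_inj.
move=> v /mapP [t]; rewrite mem_enum inE => /asboolP [i it] ->.
by change (tval t \in F); rewrite -it /occurs_at size_tuple.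
Qed.

Lemma size_wpow (S : Type) (y : seq S) m : size (wpow y m) = m * size y.
Proof. by rewrite /wpow size_flatten /shape map_nseq sumn_nseq mulnC. Qed.

Lemma count_wpow (S : Type) (P : pred S) y m : count P (wpow y m) = m * count P y.
Proof. by rewrite /wpow count_flatten map_nseq sumn_nseq mulnC. Qed.

Definition glue (S : Type) x (u v : nat -> S) t : S := if t < x then u t else v (t - x).

Lemma size_le_sumn (S : eqType) (s : seq (seq S)) u : u \in s -> size u <= sumn (map size s).
Proof. by elim: s => [|v s IH] //=; rewrite inE => /orP[/eqP->|/IH]; lia. Qed.

Section Construction.
Variable T : finType.
Variables a b : T.
Variable Nf : nat -> nat.

Fixpoint run j := if j is j'.+1 then (run j' + Nf (5 * j + 11)).+1 else (Nf 11).+1.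

Definition yword j : seq T := nseq (run j) a ++ [:: b].

(* The letter at position q of the periodic word y_c y_c y_c ... *)
Definition yper c q : T := if q %% (run c).+1 == run c then b else a.

(* r k: 2-adic valuation of k + 1; each value j is taken infinitely often. *)
Definition ruler k := logn 2 k.+1.

Definition lenX k := run k * (run (ruler k)).+1.

Fixpoint lenW k := if k is k'.+1 then lenW k' + lenX k' + lenW k' else 1.

(* W k p is the letter at position p < lenW k of W_k = W_(k-1) X_(k-1) W_(k-1). *)
Fixpoint W k p : T :=
  if k is k'.+1 then
    if p < lenW k' then W k' p
    else if p < lenW k' + lenX k' then yper (ruler k') (p - lenW k')
    else W k' (p - (lenW k' + lenX k'))
  else b.

(* The limit word: W_k is a prefix of W_(k+1) and lenW p > p. *)
Definition word p := W p p.

Lemma run_lower j : Nf (5 * j + 11) <= run j.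
Proof. case: j => [|j]; first exact: ltnW. rewrite [run j.+1]/=; lia. Qed.

Lemma run_mono : {homo run : i j / i <= j}.
Proof. by apply: homo_leq => [//|????|j /=]; [apply: leq_trans|lia]. Qed.

Lemma run_gt j : j < run j.
Proof. by elim: j => [|j IH] //=; lia. Qed.

Lemma lenX_ge k : run k <= lenX k.
Proof. rewrite /lenX; lia. Qed.

Lemma lenW_gt k : k < lenW k.
Proof. elim: k => [|k IH] //=; have := lenX_ge k; have := run_gt k; lia. Qed.

Lemma lenW_mono : {homo lenW : i j / i <= j}.
Proof. by apply: homo_leq => [//|????|k /=]; [apply: leq_trans|lia]. Qed.

Lemma W_left k p : p < lenW k -> W k.+1 p = W k p.
Proof. by move=> /= ->. Qed.

Lemma W_mid k p : lenW k <= p < lenW k + lenX k ->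
  W k.+1 p = yper (ruler k) (p - lenW k).
Proof. by case/andP => /= p1 ->; rewrite ltnNge p1. Qed.

Lemma W_right k p : lenW k + lenX k <= p -> W k.+1 p = W k (p - (lenW k + lenX k)).
Proof. by move=> p2 /=; rewrite ifF ?ifF //; lia. Qed.

Lemma W_prefix k m p : k <= m -> p < lenW k -> W m p = W k p.
Proof.
move=> km pk; elim: m km => [|m IH]; first by rewrite leqn0 => /eqP->.
rewrite leq_eqVlt ltnS => /orP[/eqP->//|km].
by rewrite W_left ?IH //; apply: leq_trans pk (lenW_mono km).
Qed.

Lemma W_suffix k m p : k <= m -> p < lenW k -> W m (lenW m - lenW k + p) = W k p.
Proof.
move=> km pk; elim: m km => [|m IH]; first by rewrite leqn0 => /eqP->; rewrite subnn.
rewrite leq_eqVlt ltnS => /orP[/eqP->|km]; first by rewrite subnn.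
have le_k := lenW_mono km; rewrite [lenW m.+1]/= W_right; last lia.
by rewrite -IH //; congr W; lia.
Qed.

Lemma word_W k p : p < lenW k -> word p = W k p.
Proof.
move=> pk; rewrite /word; case: (leqP k p) => kp; first exact: W_prefix.
by rewrite (@W_prefix p k) ?lenW_gt // ltnW.
Qed.

Lemma block_word k i n : i + n <= lenW k -> block word i n = block (W k) i n.
Proof. by move=> h; apply: eq_block => t tn; apply: word_W; lia. Qed.

Lemma run_le_lenW k : run k <= lenW k.+1.
Proof. by have := lenX_ge k; rewrite [lenW k.+1]/=; lia. Qed.

Lemma yper_period c p q : yper c (p * (run c).+1 + q) = yper c q.
Proof. by rewrite /yper modnMDl. Qed.

Lemma yper_modl c r t : yper c (r %% (run c).+1 + t) = yper c (r + t).
Proof. by rewrite /yper modnDml. Qed.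

Lemma yper_first c q : q <= run c -> yper c q = if q == run c then b else a.
Proof. by move=> qc; rewrite /yper modn_small. Qed.

Lemma yper_small c q : q < run c -> yper c q = a.
Proof. by move=> qc; rewrite yper_first ?ifF //; [apply/eqP | ]; lia. Qed.

Lemma yper_window c n r t : n <= run c -> t < n ->
  yper c (r + t) = if t == run c - r %% (run c).+1 then b else a.
Proof.
move=> nc tn; set m := (run c).+1; have sm : r %% m < m by rewrite ltn_mod.
rewrite -yper_modl -/m; case: (leqP (r %% m + t) (run c)) => st.
  by rewrite yper_first // (_ : (_ == run c) = (t == run c - r %% m)) //; apply/eqP/eqP; lia.
rewrite (_ : r %% m + t = 1 * m + (r %% m + t - m)); last lia.
by rewrite yper_period yper_small ?ifF //; [apply/eqP|]; lia.
Qed.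

Lemma yper_shift c E n x t : n <= E -> x <= n ->
  yper c (E * (run c).+1 - x + t) = yper c (n * (run c).+1 - x + t).
Proof.
move=> nE xn; have le_m : n * (run c).+1 <= E * (run c).+1 by rewrite leq_mul2r nE orbT.
rewrite (_ : E * _ - x + t = (E - n) * (run c).+1 + (n * (run c).+1 - x + t)).
  exact: yper_period.
have : x <= n * (run c).+1 by nia.
by rewrite mulnBl; lia.
Qed.

Lemma yper_end c E x t : 0 < E -> x <= (run c).+1 -> t < x ->
  yper c (E * (run c).+1 - x + t) = if t.+1 == x then b else a.
Proof.
move=> E0 xm tx; have le_m : (run c).+1 <= E * (run c).+1 by rewrite leq_pmull.
rewrite (_ : E * _ - x + t = (E - 1) * (run c).+1 + ((run c).+1 - x + t)); last first.
  by rewrite mulnBl mul1n; lia.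
rewrite yper_period yper_first; last lia.
by rewrite (_ : (_ == run c) = (t.+1 == x)) //; apply/eqP/eqP; lia.
Qed.

Section Window.
Variables n J : nat.
Hypothesis n_gt1 : 1 < n.
Hypothesis n_le_run : n <= run J.
Hypothesis run_lt_n : forall c, c < J -> run c < n.

(* The candidate factors of length n: blocks of W_(k+1) crossing the left or
   right end of X_k for k <= J, blocks of y_c^omega for c < J (at most one per
   phase), windows with at most one b, and the two kinds of blocks crossing
   an end of X_k for k > J. *)
Definition candidates : seq (seq T) :=
  [seq block (W k.+1) (lenW k - x) n | k <- iota 0 J.+1, x <- iota 0 n]
  ++ [seq block (W k.+1) (lenW k + lenX k - x) n | k <- iota 0 J.+1, x <- iota 0 n]
  ++ [seq block (yper c) r n | c <- iota 0 J, r <- iota 0 n]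
  ++ [seq block (fun t => if t == t0 then b else a) 0 n | t0 <- iota 0 n.+1]
  ++ [seq block (glue x (fun t => W J.+1 (lenW J.+1 - x + t)) (yper c)) 0 n
       | c <- iota 0 J.+1, x <- iota 0 n]
  ++ [seq block (glue x (fun t => yper c (n * (run c).+1 - x + t)) (W J.+1)) 0 n
       | c <- iota 0 J.+1, x <- iota 0 n].

Lemma size_candidates : size candidates <= n * (5 * J + 6).
Proof. rewrite /candidates !size_cat !size_allpairs !size_map !size_iota; nia. Qed.

Lemma cand_left k x : k <= J -> x < n -> block (W k.+1) (lenW k - x) n \in candidates.
Proof.
move=> kJ xn; rewrite mem_cat; apply/orP; left.
by apply: allpairs_f; rewrite mem_iota; lia.
Qed.

Lemma cand_right k x : k <= J -> x < n -> block (W k.+1) (lenW k + lenX k - x) n \in candidates.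
Proof.
move=> kJ xn; rewrite mem_cat; apply/orP; right; rewrite mem_cat; apply/orP; left.
by apply: allpairs_f; rewrite mem_iota; lia.
Qed.

Lemma cand_periodic c r : c < J -> r < n -> block (yper c) r n \in candidates.
Proof.
move=> cJ rn; do 2 (rewrite mem_cat; apply/orP; right); rewrite mem_cat; apply/orP; left.
by apply: allpairs_f; rewrite mem_iota; lia.
Qed.

Lemma cand_single_b t0 : block (fun t => if t == t0 then b else a) 0 n \in candidates.
Proof.
rewrite (_ : block _ _ _ = block (fun t => if t == minn t0 n then b else a) 0 n).
  do 3 (rewrite mem_cat; apply/orP; right); rewrite mem_cat; apply/orP; left.
  by apply/mapP; exists (minn t0 n) => //; rewrite mem_iota; lia.
by apply: eq_block => t tn; rewrite (_ : (t == t0) = (t == minn t0 n)) //; apply/eqP/eqP; lia.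
Qed.

Lemma cand_enter c x : c <= J -> x < n ->
  block (glue x (fun t => W J.+1 (lenW J.+1 - x + t)) (yper c)) 0 n \in candidates.
Proof.
move=> cJ xn; do 4 (rewrite mem_cat; apply/orP; right); rewrite mem_cat; apply/orP; left.
by apply: allpairs_f; rewrite mem_iota; lia.
Qed.

Lemma cand_exit c x : c <= J -> x < n ->
  block (glue x (fun t => yper c (n * (run c).+1 - x + t)) (W J.+1)) 0 n \in candidates.
Proof.
move=> cJ xn; do 5 (rewrite mem_cat; apply/orP; right).
by apply: allpairs_f; rewrite mem_iota; lia.
Qed.

(* A block entering X_k.  For k > J it is a suffix of W_(J+1) followed by a
   prefix of y_(r k)^omega; when r k > J that prefix consists of a's only,
   as for r k = J. *)
Lemma cand_cross_left k i : i < lenW k < i + n -> block (W k.+1) i n \in candidates.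
Proof.
case/andP=> ik ki; case: (leqP k J) => kJ.
  by rewrite (_ : i = lenW k - (lenW k - i)); [apply: cand_left|]; lia.
have le_run := run_mono (ltnW kJ); have le_len := lenW_mono kJ.
have := lenX_ge k; have := run_le_lenW J; set x := lenW k - i => lenJ lenXk.
set c := minn (ruler k) J.
suff -> : block (W k.+1) i n =
          block (glue x (fun t => W J.+1 (lenW J.+1 - x + t)) (yper c)) 0 n.
  by apply: cand_enter; [rewrite geq_minr | lia].
apply: eq_block => t tn; rewrite /glue add0n; case: ifP => tx.
  by rewrite W_left -?(@W_suffix J.+1 k); try congr W; lia.
rewrite W_mid; last lia.
case: (leqP (ruler k) J) => rJ; first by rewrite /c (minn_idPl rJ); congr yper; lia.
have := run_mono (ltnW rJ) => le_runk.
by rewrite /c (minn_idPr (ltnW rJ)) !yper_small //; lia.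
Qed.

(* A block inside X_k is periodic with period run (r k) + 1: a short period
   (r k < J) leaves at most n phases, a long one at most one b. *)
Lemma cand_inside k i : lenW k <= i -> i + n <= lenW k + lenX k ->
  block (W k.+1) i n \in candidates.
Proof.
move=> ki ik; set c := ruler k; set r := i - lenW k.
have -> : block (W k.+1) i n = block (yper c) r n.
  by apply: eq_block => t tn; rewrite W_mid; [congr yper | apply/andP]; lia.
case: (ltnP c J) => cJ.
  rewrite (_ : block _ r n = block (yper c) (r %% (run c).+1) n).
    by apply: cand_periodic => //; have := ltn_mod r (run c).+1; have := run_lt_n cJ; lia.
  by apply: eq_block => t _; rewrite yper_modl.
rewrite (_ : block _ r n = block (fun t => if t == run c - r %% (run c).+1 then b else a) 0 n).
  exact: cand_single_b.
by apply: eq_block => t tn; rewrite (@yper_window _ n) //; apply: leq_trans n_le_run (run_mono cJ).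
Qed.

(* A block leaving X_k.  For k > J it is a suffix of y_(r k)^n followed by a
   prefix of W_(J+1); when r k > J that suffix is a^(x-1) b, as for r k = J. *)
Lemma cand_cross_right k i : lenW k <= i < lenW k + lenX k -> lenW k + lenX k < i + n ->
  block (W k.+1) i n \in candidates.
Proof.
case/andP=> ki ik ki'; set x := lenW k + lenX k - i.
case: (leqP k J) => kJ.
  by rewrite (_ : i = lenW k + lenX k - x); [apply: cand_right|]; lia.
have le_run := run_mono (ltnW kJ); have le_len := lenW_mono kJ.
have := lenX_ge k; have := run_le_lenW J => lenJ lenXk.
set c := minn (ruler k) J.
suff -> : block (W k.+1) i n =
          block (glue x (fun t => yper c (n * (run c).+1 - x + t)) (W J.+1)) 0 n.
  by apply: cand_exit; [rewrite geq_minr | lia].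
apply: eq_block => t tn; rewrite /glue add0n; case: ifP => tx; last first.
  by rewrite W_right ?(@W_prefix J.+1 k); try congr W; lia.
rewrite W_mid; last lia.
have lenXe : lenX k = run k * (run (ruler k)).+1 by [].
rewrite (_ : i + t - lenW k = run k * (run (ruler k)).+1 - x + t); last lia.
case: (leqP (ruler k) J) => rJ.
  by rewrite /c (minn_idPl rJ) (@yper_shift _ _ n) //; lia.
have := run_mono (ltnW rJ); have := run_gt k => run_k run_r.
by rewrite /c (minn_idPr (ltnW rJ)) !yper_end //; lia.
Qed.

Lemma blocks_in_candidates k i : i + n <= lenW k -> block (W k) i n \in candidates.
Proof.
elim: k i => [|k IH] i; rewrite [lenW _]/= => in_k; first lia.
case: (leqP (i + n) (lenW k)) => [in_left | ki].
  rewrite (_ : block _ i n = block (W k) i n) ?IH //.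
  by apply: eq_block => t tn; rewrite W_left //; lia.
case: (leqP (lenW k + lenX k) i) => [in_right | ik].
  rewrite (_ : block _ i n = block (W k) (i - (lenW k + lenX k)) n); first by apply: IH; lia.
  by apply: eq_block => t tn; rewrite W_right; [congr W|]; lia.
case: (ltnP i (lenW k)) => [il | li]; first by apply: cand_cross_left; apply/andP.
case: (leqP (i + n) (lenW k + lenX k)) => [inX | outX]; first exact: cand_inside.
by apply: cand_cross_right => //; apply/andP.
Qed.

Lemma complexity_window : complexity word n <= n * (5 * J + 6).
Proof.
apply: leq_trans (complexity_le_size _) size_candidates => i.
have := lenW_gt (i + n) => len.
by rewrite (@block_word (i + n)) ?blocks_in_candidates //; lia.
Qed.

End Window.

(* The complexity bound: for n > run 0, choose the least J with n <= run J;
   then f n >= 5 J + 6 since n > run (J-1) >= Nf (5 J + 6). *)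
Lemma complexity_word (f : nat -> nat) : (forall M m, Nf M <= m -> M <= f m) ->
  forall m, run 0 < m -> complexity word m <= m * f m.
Proof.
move=> Nf_f m m_gt.
have ex_run : exists j, m <= run j by exists m; apply/ltnW/run_gt.
case: (ex_minnP ex_run) => J m_le J_min.
have run_lt : forall c, c < J -> run c < m.
  by move=> c cJ; rewrite ltnNge; apply/negP => /J_min; lia.
have J_gt0 : 0 < J by case: J m_le {J_min} run_lt; lia.
apply: leq_trans (complexity_window _ m_le run_lt) _; first by have := run_gt 0; lia.
rewrite leq_mul2l; apply/orP; right.
have := Nf_f _ m (leq_trans (run_lower J.-1) (ltnW (run_lt _ _))); lia.
Qed.

(* An occurrence at i in W_m reappears at lenW m + lenX m + i, in W_(m+1). *)
Lemma word_recurrent : recurrent word.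
Proof.
move=> u [i occ] N; set m := N + i + size u.
have := lenW_gt m => len_m.
exists (lenW m + lenX m + i); split; first lia.
rewrite /occurs_at -[in RHS]occ; apply: eq_block => t tn.
rewrite (@word_W m.+1); last by rewrite [lenW m.+1]/=; lia.
rewrite W_right ?(@word_W m (i + t)); try lia.
by rewrite -[_ + i + t]addnA addKn.
Qed.

Lemma size_yword c : size (yword c) = (run c).+1.
Proof. by rewrite size_cat size_nseq addn1. Qed.

Lemma nth_wpow_yword c m q : q < m * (run c).+1 -> nth a (wpow (yword c) m) q = yper c q.
Proof.
elim: m q => [|m IH] q //; rewrite mulSn => q_lt.
rewrite /wpow /= -/(wpow (yword c) m) nth_cat size_yword.
case: (ltnP q (run c).+1) => q_small.
  rewrite yper_first // nth_cat size_nseq.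
  case: (ltnP q (run c)) => q_run; first by rewrite nth_nseq q_run ifF //; apply/eqP; lia.
  by rewrite (_ : q = run c) ?subnn ?eqxx //; lia.
rewrite IH; last lia.
by rewrite -{2}(subnK q_small) -(yper_period c 1) mul1n addnC.
Qed.

Lemma ruler_odd j m : ruler (2 ^ j * m.*2.+1).-1 = j.
Proof.
have pos : 0 < 2 ^ j * m.*2.+1 by rewrite muln_gt0 expn_gt0.
rewrite /ruler prednK // lognM ?expn_gt0 // pfactorK // logn_coprime ?addn0 //.
by rewrite coprime2n /= odd_double.
Qed.

(* Every power of every y_j occurs in w, at the start of a suitable X_k. *)
Lemma power_factor j m : factor word (wpow (yword j) m).
Proof.
set k := (2 ^ j * m.*2.+1).-1.
have ruler_k : ruler k = j by apply: ruler_odd.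
have m_le_k : m <= k.
  have : m.*2.+1 <= 2 ^ j * m.*2.+1 by rewrite leq_pmull ?expn_gt0.
  by rewrite /k -addnn; lia.
have m_lt_run : m < run k by have := run_gt k; lia.
have lenX_k : m * (run j).+1 <= lenX k by rewrite /lenX ruler_k leq_mul2r ltnW ?orbT.
exists (lenW k); rewrite /occurs_at size_wpow size_yword -[RHS](mkseq_nth a) size_wpow size_yword.
change (block word (lenW k) (m * (run j).+1) =
        block (nth a (wpow (yword j) m)) 0 (m * (run j).+1)).
apply: eq_block => t tn; rewrite nth_wpow_yword // (@word_W k.+1); last first.
  by rewrite [lenW k.+1]/=; lia.
by rewrite W_mid ?ruler_k; [congr yper|apply/andP]; lia.
Qed.

(* y_c is primitive: it contains exactly one b. *)
Lemma yword_primitive c : a != b -> primitive (yword c).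
Proof.
move=> ab; split; first by rewrite /yword; case: (run c).
move=> z p p_ge2 y_eq; have := congr1 (count_mem b) y_eq.
rewrite count_wpow count_cat count_nseq /= eqxx (negbTE ab) mul0n.
by case: (count_mem b z); lia.
Qed.

(* Given finitely many words, some y_c (longer than all of them) is a new
   primitive factor all of whose powers occur in w. *)
Lemma fresh_power_word (s : seq (seq T)) : a != b -> exists c,
  [/\ yword c \notin s, primitive (yword c), factor word (yword c) &
      forall m, 1 <= m -> factor word (wpow (yword c) m)].
Proof.
move=> ab; exists (sumn (map size s)); split.
- apply/negP => /size_le_sumn; rewrite size_yword ltnNge => /negP; apply.
  exact/ltnW/run_gt.
- exact: yword_primitive.
- by have := power_factor (sumn (map size s)) 1; rewrite /wpow /= cats0.
- by move=> m _; apply: power_factor.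
Qed.

End Construction.

Theorem theorem3 (Sigma : finType) (f : nat -> nat) :
  (forall M, exists N, forall n, N <= n -> M <= f n) ->
  2 <= #|Sigma| ->
  exists w : nat -> Sigma,
    [/\ recurrent w,
        (exists N, forall n, N <= n -> complexity w n <= n * f n) &
        (forall s : seq (seq Sigma), exists y : seq Sigma,
            [/\ y \notin s, primitive y, factor w y &
                forall n, 1 <= n -> factor w (wpow y n)])].
Proof.
move=> f_unbounded /card_gt1P [a [b [_ _ ab]]].
have [Nf Nf_f] := choice f_unbounded.
exists (word a b Nf); split.
- exact: word_recurrent.
- by exists (run Nf 0).+1 => n n_gt; apply: complexity_word.
- move=> s; have [c [fresh prim fac pows]] := @fresh_power_word _ a b Nf s ab.
  by exists (yword a b Nf c); split.
Qed.
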